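(* Let $N$ be a positive even integer and let $\sigma\colon\{0,1\}^*\to\{0,1,\#\}^*$ be the substitution defined by $\sigma(0)=\#0^{N-1}$ and $\sigma(1)=\#1^{N-1}$. Let $\mathbf{w}$ be an infinite binary word. If an abelian power $u_0\cdots u_{e-1}$ with $e\ge N$ occurs in $\sigma(\mathbf{w})$, then $\mathbf{w}$ contains an abelian power $v_0\cdots v_{e-1}$ with $|v_0|=|u_0|/N$.
   Context: Two finite words $u,v$ are abelian equivalent, written $u\sim v$, if they are permutations of each other. An abelian power of exponent $e$ (a positive integer) and period $m$ is a word of the form $u_0u_1\cdots u_{e-1}$ where $u_0,\dots,u_{e-1}$ are nonempty, pairwise abelian equivalent, and $m=|u_0|$. The image $\sigma(\mathbf{w})$ of an infinite word is obtained by applying $\sigma$ letter by letter. *)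

From mathcomp Require Import all_boot.
Set Implicit Arguments. Unset Strict Implicit. Unset Printing Implicit Defensive.

(* Infinite words over T are functions nat -> T. *)

Definition factor (T : Type) (f : nat -> T) (p len : nat) : seq T :=
  mkseq (fun i => f (p + i)) len.

Definition occurs (T : Type) (u : seq T) (f : nat -> T) : Prop :=
  exists p, factor f p (size u) = u.

Definition abelian_eq (T : eqType) (u v : seq T) : bool := perm_eq u v.

Definition block (T : Type) (s : seq T) (m k : nat) : seq T :=
  take m (drop (k * m) s).

(* s = u_0 u_1 ... u_{e-1} with |u_0| = m, all u_k nonempty and pairwise
   abelian equivalent (hence all of length m); e positive. *)
Definition abelian_power (T : eqType) (s : seq T) (e m : nat) : Prop :=
  [/\ 0 < e, 0 < m, size s = e * m &
      forall i j, i < e -> j < e -> abelian_eq (block s m i) (block s m j)].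

(* Alphabet {0,1,#}: Some false = 0, Some true = 1, None = #. *)
Definition sigma_letter (N : nat) (b : bool) : seq (option bool) :=
  None :: nseq N.-1 (Some b).

Definition sigma_inf (N : nat) (w : nat -> bool) : nat -> option bool :=
  fun i => nth None (sigma_letter N (w (i %/ N))) (i %% N).

From mathcomp Require Import all_boot zify.

Set Implicit Arguments.
Unset Strict Implicit.
Unset Printing Implicit Defensive.

(* Write p = j N + s with s < N for the position of u in sigma(w) and m for
   the period.  Any N consecutive letters of sigma(w) contain exactly one #, and
   all blocks contain the same number C of #'s, so the first N blocks give
   m = C N and block k is sigma(w[j + k C, j + (k+1) C)) shifted by s letters.
   Counting 0's in it gives B + r X_k = (N-1) S_k + r X_(k+1) for k < e, where
   r = s - 1, X_k = [w (j + k C) = 0], B is the number of 0's in any block and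
   S_k that in w[j + k C, j + (k+1) C).  Comparing two such equations modulo
   the odd number N - 1 > r shows that the Boolean sequence X has constant
   increments, hence is constant, and then S_k = S_0. *)

Section Factors.

Variables (T : Type) (f : nat -> T).

Lemma factorE P L : factor f P L = map f (iota P L).
Proof. by rewrite /factor /mkseq -[in RHS](addn0 P) iotaDl -map_comp. Qed.

Lemma size_factor P L : size (factor f P L) = L.
Proof. exact: size_mkseq. Qed.

Lemma factor_cat P L1 L2 :
  factor f P (L1 + L2) = factor f P L1 ++ factor f (P + L1) L2.
Proof. by rewrite !factorE iotaD map_cat. Qed.

Lemma factor1 P : factor f P 1 = [:: f P].
Proof. by rewrite factorE. Qed.

Lemma take_factor n P L : take n (factor f P L) = factor f P (minn n L).
Proof. by rewrite !factorE -map_take take_iota. Qed.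

Lemma drop_factor n P L : drop n (factor f P L) = factor f (P + n) (L - n).
Proof. by rewrite !factorE -map_drop drop_iota. Qed.

Lemma block_factor P e m k : k < e ->
  block (factor f P (e * m)) m k = factor f (P + k * m) m.
Proof.
move=> ke; rewrite /block drop_factor take_factor; congr factor.
have le_km : k * m <= e * m by rewrite leq_mul2r ltnW ?orbT.
by apply/minn_idPl; rewrite leq_subRL // addnC -mulSn leq_mul2r ke orbT.
Qed.

End Factors.

Section AbelianPowers.

Variables (T : eqType) (s : seq T) (e m : nat) (a : pred T).
Hypothesis pow_s : abelian_power s e m.

Lemma count_block_abelian_power k : k < e ->
  count a (block s m k) = count a (block s m 0).
Proof. by case: pow_s => e0 _ _ blocks_eq ke; apply/permP/blocks_eq. Qed.

Lemma count_take_abelian_power k : k <= e ->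
  count a (take (k * m) s) = k * count a (block s m 0).
Proof.
elim: k => [|k IH] ke; first by rewrite take0.
by rewrite mulSnr takeD count_cat IH 1?ltnW // count_block_abelian_power // mulSnr.
Qed.

End AbelianPowers.

Lemma perm_eq_bool (s1 s2 : seq bool) :
  size s1 = size s2 -> count_mem false s1 = count_mem false s2 -> perm_eq s1 s2.
Proof.
move=> size_eq count_eq; apply/allP => -[] _ /=; last by rewrite count_eq.
have count_true s : count_mem true s = size s - count_mem false s.
  by rewrite -(count_predC (pred1 false)) addKn; apply: eq_count => -[].
by rewrite !count_true size_eq count_eq.
Qed.

Section Multiples.

Variable N : nat.
Hypothesis N_gt0 : 0 < N.

Lemma count_dvdn_iota_window P : count (dvdn N) (iota P N) = 1.
Proof.
elim: P => [|P IH].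
  case: N N_gt0 => // n _ /=; rewrite (@eq_in_count _ _ pred0) ?count_pred0 // => i.
  by rewrite mem_iota => /andP[i_gt0 lti]; rewrite /= gtnNdvd.
have := congr1 (count (dvdn N)) (esym (iotaD P 1 N)).
by rewrite [1 + N]addnC iotaD !count_cat IH /= dvdn_addl // addn1; lia.
Qed.

Lemma count_dvdn_iota P q : count (dvdn N) (iota P (q * N)) = q.
Proof.
elim: q P => [|q IH] P //.
by rewrite mulSn iotaD count_cat count_dvdn_iota_window IH.
Qed.

End Multiples.

Lemma eqmod_mul_small (M r a b : nat) : odd M -> 0 < r < M -> a <= 2 -> b <= 2 ->
  r * a = r * b %[mod M] -> a = b.
Proof.
move=> oddM /andP[r_gt0 ltrM].
wlog ba : a b / b <= a.
  move=> sym a2 b2 eq_ab; case: (leqP b a) => [ba|/ltnW ab]; first exact: sym.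
  by symmetry; apply: sym.
move=> a2 b2 /eqP; rewrite eqn_mod_dvd ?leq_mul2l ?ba ?orbT // -mulnBr => dvd_M.
apply/eqP; rewrite eqn_leq ba andbT leqNgt; apply/negP => ltba.
have cop : coprime M (a - b).
  have [->|->] : a - b = 1 \/ a - b = 2 by lia.
  - exact: coprimen1.
  - by rewrite coprimen2.
by move: dvd_M; rewrite Gauss_dvdl // => /(dvdn_leq r_gt0); rewrite leqNgt ltrM.
Qed.

Section ShiftRecurrence.

Variables (M r B e : nat) (X : nat -> bool) (S : nat -> nat).
Hypotheses (oddM : odd M) (ltrM : r < M) (e_gt1 : 1 < e).
Hypothesis recE : forall k, k < e -> B + r * X k = M * S k + r * X k.+1.

Lemma shift_recurrence_cross k k' : 0 < r -> k < e -> k' < e ->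
  X k.+1 + X k' = X k'.+1 + X k.
Proof.
move=> r_gt0 ke k'e; have add_le2 (b c : bool) : b + c <= 2 by case: b; case: c.
apply: (@eqmod_mul_small M r); rewrite ?r_gt0 ?add_le2 //.
have E : M * S k + r * (X k.+1 + X k') = M * S k' + r * (X k'.+1 + X k).
  by have := recE ke; have := recE k'e; rewrite !mulnDr; lia.
by rewrite -(modnMDl (S k)) -[RHS](modnMDl (S k')) !(mulnC _ M) E.
Qed.

Lemma shift_recurrence_const k : k < e -> S k = S 0.
Proof.
have M_gt0 : 0 < M by case: M oddM.
have e_gt0 : 0 < e := ltnW e_gt1.
move=> ke; apply/eqP; rewrite -(eqn_pmul2l M_gt0); apply/eqP.
have := recE ke; have := recE e_gt0; case: (posnP r) => [-> | r_gt0]; first lia.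
have X01 : X 1 = X 0.
  have := shift_recurrence_cross r_gt0 e_gt1 e_gt0.
  by case: (X 0); case: (X 1); case: (X 2).
have Xk : X k.+1 = X k by have := shift_recurrence_cross r_gt0 ke e_gt0; rewrite X01; lia.
by rewrite Xk X01; lia.
Qed.

End ShiftRecurrence.

Section Substitution.

Variables (N : nat) (w : nat -> bool).
Hypothesis N_gt0 : 0 < N.

Local Notation sw := (sigma_inf N w).

Lemma sigma_inf_hash i : (sw i == None) = (N %| i).
Proof.
rewrite /sigma_inf /sigma_letter /dvdn; case: (i %% N) (ltn_pmod i N_gt0) => //= t ltt.
by rewrite nth_nseq; case: ifP => //; lia.
Qed.

Lemma count_hash_factor P L :
  count (pred1 None) (factor sw P L) = count (dvdn N) (iota P L).
Proof. by rewrite factorE count_map; apply: eq_count => i; rewrite /= sigma_inf_hash. Qed.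

Lemma factor_sigma_inf_prefix a t : t <= N ->
  factor sw (a * N) t = take t (sigma_letter N (w a)).
Proof.
move=> tN; apply: (@eq_from_nth _ None).
  by rewrite size_factor size_takel //= size_nseq prednK.
move=> i; rewrite size_factor => lti.
rewrite nth_take // nth_mkseq // /sigma_inf divnMDl ?modnMDl //.
by rewrite divn_small ?modn_small ?addn0 //; lia.
Qed.

Lemma count0_sigma_prefix a t : t <= N ->
  count (pred1 (Some false)) (factor sw (a * N) t) = t.-1 * ~~ w a.
Proof.
move=> tN; rewrite factor_sigma_inf_prefix // /sigma_letter; case: t tN => [|t] // ltt.
rewrite [take _ _]/= take_nseq; last by rewrite -ltnS prednK.
by rewrite [count _ _]/= count_nseq add0n mulnC; case: (w a).
Qed.

Lemma count0_sigma_image a q :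
  count (pred1 (Some false)) (factor sw (a * N) (q * N)) =
  N.-1 * count (pred1 false) (factor w a q).
Proof.
elim: q a => [|q IH] a; first by rewrite muln0.
rewrite mulSn factor_cat count_cat count0_sigma_prefix // -mulSnr IH.
by rewrite -[q.+1]add1n factor_cat factor1 count_cat /= eqbF_neg addn1 addn0 mulnDr.
Qed.

Lemma count0_sigma_shift a q s : s <= N ->
  s.-1 * ~~ w a + count (pred1 (Some false)) (factor sw (a * N + s) (q * N)) =
  N.-1 * count (pred1 false) (factor w a q) + s.-1 * ~~ w (a + q).
Proof.
move=> sN; rewrite -count0_sigma_prefix // -count_cat -factor_cat addnC.
by rewrite factor_cat count_cat count0_sigma_image -mulnDl count0_sigma_prefix.
Qed.

End Substitution.

Lemma period_sigma_abelian_power N w (u : seq (option bool)) e m p : 0 < N ->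
  abelian_power u e m -> N <= e -> factor (sigma_inf N w) p (e * m) = u ->
  m = count (pred1 None) (block u m 0) * N.
Proof.
move=> N_gt0 pow_u Ne occ_u.
have le_Nm_em : N * m <= e * m by rewrite leq_mul2r Ne orbT.
have := count_take_abelian_power (pred1 None) pow_u Ne.
rewrite -{1}occ_u take_factor (minn_idPl le_Nm_em) count_hash_factor //.
by rewrite mulnC count_dvdn_iota // mulnC.
Qed.

Theorem lemma3 (N : nat) (hN : 0 < N) (hev : ~~ odd N) (w : nat -> bool)
  (u : seq (option bool)) (e m : nat) :
  abelian_power u e m -> N <= e -> occurs u (sigma_inf N w) ->
  N %| m /\ exists v : seq bool, abelian_power v e (m %/ N) /\ occurs v w.
Proof.
move=> pow_u Ne [p]; have [e_gt0 m_gt0 -> _] := pow_u => occ_u.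
have N_gt1 : 1 < N by case: N hN hev {Ne occ_u} => [|[|]].
have m_eq := period_sigma_abelian_power hN pow_u Ne occ_u.
set C := count _ _ in m_eq.
split; first by rewrite m_eq dvdn_mull.
have C_gt0 : 0 < C by move: m_gt0; rewrite m_eq muln_gt0 => /andP[].
rewrite m_eq mulnK //.
set j := p %/ N; set s := p %% N.
have lt_sN : s < N := ltn_pmod p hN.
pose S k := count (pred1 false) (factor w (j + k * C) C).
have S_const k : k < e -> S k = S 0.
  apply: (@shift_recurrence_const N.-1 s.-1
           (count (pred1 (Some false)) (block u m 0)) e (fun k => ~~ w (j + k * C))) => //.
  - by move: hev; rewrite -{1}(prednK hN) /= negbK.
  - by lia.
  - by apply: leq_trans Ne.
  move=> i ie; rewrite -(count_block_abelian_power _ pow_u ie) -occ_u block_factor //.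
  have -> : p + i * m = (j + i * C) * N + s by rewrite {1}(divn_eq p N) m_eq; lia.
  by rewrite m_eq addnC count0_sigma_shift 1?ltnW // mulSnr addnA.
exists (factor w j (e * C)); split; last by exists j; rewrite size_factor.
split => //; first by rewrite size_factor.
move=> i i' ie i'e; rewrite /abelian_eq !block_factor //.
by apply: perm_eq_bool; rewrite ?size_factor // -!/(S _) !S_const.
Qed.
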